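(* Let $P$ be a program of the imperative language described in the context, and suppose $\vdash P : M$ is derivable in the deterministic calculus, where $M$ is an $n\times n$ matrix with coefficients in $\{0,1,2\}^p\to\mathrm{mwp}^{\infty}$. Then for every $\vec a\in\{0,1,2\}^p$: $\vdash_{\mathrm{JK}} P : M[\vec a]$ is derivable in the original Jones–Kristiansen calculus if and only if no coefficient of $M[\vec a]$ equals $\infty$.
   Context: Language. Variables range over $X_1,\dots,X_n$ (a fixed finite set), and $b$ ranges over boolean expressions (unspecified; they play no role). Expressions: $e ::= X \mid X - Y \mid X + Y \mid X * Y$. Commands: $C ::= X = e \mid \texttt{if } b \texttt{ then } C \texttt{ else } C \mid \texttt{while } b \texttt{ do } \{C\} \mid \texttt{loop } X \{C\} \mid C;C$, where $\texttt{loop } X\{C\}$ executes $C$ $X$ times. A program is a sequential composition of commands. Semi-rings. $\mathrm{mwp}$ has carrier $\{0,m,w,p\}$ with $0<m<w<p$, addition $\max$, and $\alpha\times\beta=\max(\alpha,\beta)$ if $\alpha,\beta\neq0$, $0$ otherwise. $\mathrm{mwp}^\infty$ has carrier $\{0,m,w,p,\infty\}$ with $0<m<w<p<\infty$, addition $\max$, and $\alpha\times\beta=0$ if $\alpha,\beta\neq\infty$ and one of them is $0$, $\max(\alpha,\beta)$ otherwise. $\{0,1,2\}^p\to\mathrm{mwp}^\infty$ is the semi-ring of functions with pointwise operations (constants identified with constant functions). Matrices are $n\times n$ with componentwise $\oplus$, usual product $\otimes$, unit $\mathbf{1}$ ($m$ on the diagonal, $0$ elsewhere), closure $M^*=\mathbf{1}\oplus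 M\oplus M^2\oplus\cdots$. $M[\vec a]$ is $M$ with every coefficient evaluated at $\vec a$. $\delta(i,k)(\vec a)=m$ if $a_k=i$, $0$ otherwise. $\{^{\alpha}_i\}$ is the $n$-vector with $\alpha$ in row $i$ and $0$ elsewhere, $\{^\alpha_i,^\beta_j\}=\{^\alpha_i\}\oplus\{^\beta_j\}$, $\alpha V$ is scalar multiplication, $\mathbf{1}\xleftarrow{j}V$ is the unit matrix with column $j$ replaced by $V$, $\{^\alpha_i\to j\}$ is the matrix with $\alpha$ at $(i,j)$ and $0$ elsewhere, and $\mathrm{var}(e)$ is the set of variables of $e$. Original (non-deterministic) Jones–Kristiansen calculus $\vdash_{\mathrm{JK}}$, over $\mathrm{mwp}$: (E1) $\vdash_{\mathrm{JK}} X_i:\{^m_i\}$; (E2) $\vdash_{\mathrm{JK}} e:\bigoplus\{\{^w_i\}\mid X_i\in\mathrm{var}(e)\}$; (E3) for $\star\in\{+,-\}$, from $\vdash_{\mathrm{JK}}X_i:V_1$, $\vdash_{\mathrm{JK}}X_j:V_2$ infer $\vdash_{\mathrm{JK}}X_i\star X_j: pV_1\oplus V_2$; (E4) same premises, conclusion $V_1\oplus pV_2$; (A) from $\vdash_{\mathrm{JK}}e:V$ infer $\vdash_{\mathrm{JK}}X_j=e:\mathbf{1}\xleftarrow{j}V$; (C) $C_1;C_2:M_1\otimes M_2$; (I) $\texttt{if } b \texttt{ then } C_1\texttt{ else } C_2 : M_1\oplus M_2$; (L) from $\vdash_{\mathrm{JK}}C:M$, provided $M^*_{ii}=m$ for all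 $i$, infer $\vdash_{\mathrm{JK}}\texttt{loop } X_l\{C\}: M^*\oplus\{^p_l\to j\mid\exists i,\ M^*_{ij}=p\}$; (W) from $\vdash_{\mathrm{JK}}C:M$, provided $M^*_{ii}=m$ for all $i$ and $M^*_{ij}\neq p$ for all $i,j$, infer $\vdash_{\mathrm{JK}}\texttt{while } b\texttt{ do }\{C\}:M^*$. Deterministic calculus $\vdash$, over $\{0,1,2\}^p\to\mathrm{mwp}^\infty$: each application of rule E$^A$ receives its own choice index $k\in\{1,\dots,p\}$ ($p$ = number of applications). (E$^A$) for $\star\in\{+,-\}$: $\vdash X_i\star X_j:\delta(0,k)\{^m_i,^p_j\}\oplus\delta(1,k)\{^p_i,^m_j\}\oplus\delta(2,k)\{^w_i,^w_j\}$; (E$^M$) $\vdash X_i*X_j:\{^w_i,^w_j\}$; (E$^S$) $\vdash X_i:\{^m_i\}$; rules (A), (C), (I) as in the original calculus; (L$^\infty$) from $\vdash C:M$ infer $\vdash\texttt{loop } X_l\{C\}:M^*\oplus\{^\infty_j\to j\mid M^*_{jj}\neq m\}\oplus\{^p_l\to j\mid\exists i,\ M^*_{ij}=p\}$; (W$^\infty$) from $\vdash C:M$ infer $\vdash\texttt{while } b\texttt{ do }\{C\}:M^*\oplus\{^\infty_j\to j\mid M^*_{jj}\neq m\}\oplus\{^\infty_i\to j\mid M^*_{ij}=p\}$ (conditions understood pointwise for each choice assignment). *)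

From mathcomp Require Import all_boot.
Set Implicit Arguments. Unset Strict Implicit. Unset Printing Implicit Defensive.

(* Syntax: variables X_1..X_n are represented by 'I_n.                 *)
(* Boolean guards b play no role in either calculus and are omitted.   *)
Inductive expr (n : nat) : Type :=
| EVar of 'I_n
| ESub of 'I_n & 'I_n
| EAdd of 'I_n & 'I_n
| EMul of 'I_n & 'I_n.

Inductive cmd (n : nat) : Type :=
| Asgn of 'I_n & expr n
| Ite of cmd n & cmd n
| While of cmd n
| Loop of 'I_n & cmd n
| Seq of cmd n & cmd n.

Definition evar n (e : expr n) (k : 'I_n) : bool :=
  match e with
  | EVar i => k == i
  | ESub i j | EAdd i j | EMul i j => (k == i) || (k == j)
  end.

Inductive mwp := M0 | Mm | Mw | Mp.
Definition mwp_rank (x : mwp) : nat :=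
  match x with M0 => 0 | Mm => 1 | Mw => 2 | Mp => 3 end.
Definition mwp_le (x y : mwp) : Prop := mwp_rank x <= mwp_rank y.
Definition mwp_add (x y : mwp) : mwp := if mwp_rank x <= mwp_rank y then y else x.
Definition mwp_mul (x y : mwp) : mwp :=
  if (mwp_rank x == 0) || (mwp_rank y == 0) then M0 else mwp_add x y.

Inductive mwpi := I0 | Im | Iw | Ip | Iinf.
Definition mwpi_rank (x : mwpi) : nat :=
  match x with I0 => 0 | Im => 1 | Iw => 2 | Ip => 3 | Iinf => 4 end.
Definition mwpi_le (x y : mwpi) : Prop := mwpi_rank x <= mwpi_rank y.
Definition mwpi_add (x y : mwpi) : mwpi := if mwpi_rank x <= mwpi_rank y then y else x.
Definition mwpi_mul (x y : mwpi) : mwpi :=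
  if [&& mwpi_rank x != 4, mwpi_rank y != 4 & (mwpi_rank x == 0) || (mwpi_rank y == 0)]
  then I0 else mwpi_add x y.

Definition emb (x : mwp) : mwpi :=
  match x with M0 => I0 | Mm => Im | Mw => Iw | Mp => Ip end.

Definition mx (T : Type) (n : nat) := 'I_n -> 'I_n -> T.
Definition vc (T : Type) (n : nat) := 'I_n -> T.

Section Matrices.
Variables (T : Type) (add mul : T -> T -> T) (zero one : T) (le : T -> T -> Prop).
Variable n : nat.

Definition mx_add (A B : mx T n) : mx T n := fun i j => add (A i j) (B i j).
Definition mx_mul (A B : mx T n) : mx T n :=
  fun i j => \big[add/zero]_(k < n) mul (A i k) (B k j).
Definition mx_one : mx T n := fun i j => if i == j then one else zero.
Fixpoint mx_pow (A : mx T n) (k : nat) : mx T n :=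
  if k is k'.+1 then mx_mul (mx_pow A k') A else mx_one.

(* S = A^* = 1 (+) A (+) A^2 (+) ... : the (infinite) sum in the idempotent
   semi-ring, i.e. the least upper bound of the powers for the natural order. *)
Definition is_star (A S : mx T n) : Prop :=
  forall i j, (forall k, le (mx_pow A k i j) (S i j)) /\
              (forall x, (forall k, le (mx_pow A k i j) x) -> le (S i j) x).

Definition vc_add (U V : vc T n) : vc T n := fun i => add (U i) (V i).
Definition vc_scale (a : T) (V : vc T n) : vc T n := fun i => mul a (V i).
Definition vc_sgl (a : T) (i : 'I_n) : vc T n := fun k => if k == i then a else zero.
Definition col_replace (j : 'I_n) (V : vc T n) : mx T n :=
  fun i k => if k == j then V i else mx_one i k.
End Matrices.

Section JK.
Variable n : nat.
Notation vec := (vc mwp n).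
Notation mat := (mx mwp n).
Notation vadd := (@vc_add mwp mwp_add n).
Notation vscale := (@vc_scale mwp mwp_mul n).
Notation sgl := (@vc_sgl mwp M0 n).
Notation madd := (@mx_add mwp mwp_add n).
Notation mmul := (@mx_mul mwp mwp_add mwp_mul M0 n).
Notation star := (@is_star mwp mwp_add mwp_mul M0 Mm mwp_le n).

Inductive jk_expr : expr n -> vec -> Prop :=
| JK_E1 i : jk_expr (EVar i) (sgl Mm i)
| JK_E2 e : jk_expr e (fun k => if evar e k then Mw else M0)
| JK_E3sub i j V1 V2 : jk_expr (EVar i) V1 -> jk_expr (EVar j) V2 ->
    jk_expr (ESub i j) (vadd (vscale Mp V1) V2)
| JK_E3add i j V1 V2 : jk_expr (EVar i) V1 -> jk_expr (EVar j) V2 ->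
    jk_expr (EAdd i j) (vadd (vscale Mp V1) V2)
| JK_E4sub i j V1 V2 : jk_expr (EVar i) V1 -> jk_expr (EVar j) V2 ->
    jk_expr (ESub i j) (vadd V1 (vscale Mp V2))
| JK_E4add i j V1 V2 : jk_expr (EVar i) V1 -> jk_expr (EVar j) V2 ->
    jk_expr (EAdd i j) (vadd V1 (vscale Mp V2)).

Definition jk_loop_extra (l : 'I_n) (S : mat) : mat :=
  fun r c => if (r == l) && [exists i, mwp_rank (S i c) == 3] then Mp else M0.

Inductive jk_cmd : cmd n -> mat -> Prop :=
| JK_A j e V : jk_expr e V -> jk_cmd (Asgn j e) (col_replace M0 Mm j V)
| JK_C C1 C2 M1 M2 : jk_cmd C1 M1 -> jk_cmd C2 M2 -> jk_cmd (Seq C1 C2) (mmul M1 M2)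
| JK_I C1 C2 M1 M2 : jk_cmd C1 M1 -> jk_cmd C2 M2 -> jk_cmd (Ite C1 C2) (madd M1 M2)
| JK_L l C M S : jk_cmd C M -> star M S -> (forall i, S i i = Mm) ->
    jk_cmd (Loop l C) (madd S (jk_loop_extra l S))
| JK_W C M S : jk_cmd C M -> star M S -> (forall i, S i i = Mm) ->
    (forall i j, S i j <> Mp) -> jk_cmd (While C) S.
End JK.

(* choice vectors a in {0,1,2}^p ; choice indices are 0-based: 0..p-1 *)
Definition choice (p : nat) := 'I_p -> 'I_3.
Definition dcoef (p : nat) := choice p -> mwpi.

Section Det.
Variables (p n : nat).
Notation D := (dcoef p).
Definition dadd (f g : D) : D := fun a => mwpi_add (f a) (g a).
Definition dmul (f g : D) : D := fun a => mwpi_mul (f a) (g a).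
Definition dcst (x : mwpi) : D := fun _ => x.
Definition dle (f g : D) : Prop := forall a, mwpi_le (f a) (g a).

Definition delta (i : 'I_3) (k : nat) : D :=
  fun a => if (insub k : option 'I_p) is Some k' then
             (if a k' == i then Im else I0) else I0.

Notation vec := (vc D n).
Notation mat := (mx D n).
Notation vadd := (@vc_add D dadd n).
Notation vscale := (@vc_scale D dmul n).
Notation sgl := (@vc_sgl D (dcst I0) n).
Notation madd := (@mx_add D dadd n).
Notation mmul := (@mx_mul D dadd dmul (dcst I0) n).
Notation star := (@is_star D dadd dmul (dcst I0) (dcst Im) dle n).

Definition pair_vec (x : mwpi) (i : 'I_n) (y : mwpi) (j : 'I_n) : vec :=
  vadd (sgl (dcst x) i) (sgl (dcst y) j).

Definition EA_vec (k : nat) (i j : 'I_n) : vec :=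
  vadd (vadd (vscale (delta (@Ordinal 3 0 isT) k) (pair_vec Im i Ip j))
             (vscale (delta (@Ordinal 3 1 isT) k) (pair_vec Ip i Im j)))
       (vscale (delta (@Ordinal 3 2 isT) k) (pair_vec Iw i Iw j)).

(* det_expr k e V k' : e is typed by V using the choice indices k..k'-1 *)
Inductive det_expr : nat -> expr n -> vec -> nat -> Prop :=
| D_EAsub k i j : det_expr k (ESub i j) (EA_vec k i j) k.+1
| D_EAadd k i j : det_expr k (EAdd i j) (EA_vec k i j) k.+1
| D_EM k i j : det_expr k (EMul i j) (pair_vec Iw i Iw j) k
| D_ES k i : det_expr k (EVar i) (sgl (dcst Im) i) k.

Definition diag_inf (S : mat) : mat :=
  fun r c a => if (r == c) && (mwpi_rank (S c c a) != 1) then Iinf else I0.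
Definition loop_extra (l : 'I_n) (S : mat) : mat :=
  fun r c a => if (r == l) && [exists i, mwpi_rank (S i c a) == 3] then Ip else I0.
Definition p_inf (S : mat) : mat :=
  fun r c a => if mwpi_rank (S r c a) == 3 then Iinf else I0.

Inductive det_cmd : nat -> cmd n -> mat -> nat -> Prop :=
| D_A k j e V k' : det_expr k e V k' ->
    det_cmd k (Asgn j e) (col_replace (dcst I0) (dcst Im) j V) k'
| D_C k C1 M1 k1 C2 M2 k2 : det_cmd k C1 M1 k1 -> det_cmd k1 C2 M2 k2 ->
    det_cmd k (Seq C1 C2) (mmul M1 M2) k2
| D_I k C1 M1 k1 C2 M2 k2 : det_cmd k C1 M1 k1 -> det_cmd k1 C2 M2 k2 ->
    det_cmd k (Ite C1 C2) (madd M1 M2) k2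
| D_L k l C M S k' : det_cmd k C M k' -> star M S ->
    det_cmd k (Loop l C) (madd (madd S (diag_inf S)) (loop_extra l S)) k'
| D_W k C M S k' : det_cmd k C M k' -> star M S ->
    det_cmd k (While C) (madd (madd S (diag_inf S)) (p_inf S)) k'.
End Det.

(* |- P : M in the deterministic calculus, where p is the number of
   applications of rule E^A (indices 0..p-1, each used exactly once). *)
Definition det_derivable (p n : nat) (P : cmd n) (M : mx (dcoef p) n) : Prop :=
  det_cmd 0 P M p.

Definition eval_mx (p n : nat) (M : mx (dcoef p) n) (a : choice p) : mx mwpi n :=
  fun i j => M i j a.

From HB Require Import structures.
From mathcomp Require Import all_boot.
From Stdlib Require Import FunctionalExtensionality.
Set Implicit Arguments. Unset Strict Implicit. Unset Printing Implicit Defensive.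

(* Fix a choice vector a.  Evaluation at a commutes with the operations of
   {0,1,2}^p -> mwp^oo and with the star, so M[a] is computed from the
   deterministic derivation pointwise.  mwp sits inside mwp^oo as the entries
   different from oo, and this embedding is an order embedding commuting with
   + and x; hence stars of oo-free matrices transfer back to mwp.  By induction
   on the derivation, if M[a] has no oo entry then neither have the matrices
   of the subderivations (oo is absorbing and a star dominates its matrix),
   the oo-entries added by L^oo and W^oo vanish exactly when the side
   conditions of (L) and (W) hold, and the value a_k of the k-th instance of
   E^A selects rule E4, E3 or E2.  Conversely an embedded mwp matrix has no oo
   entry. *)

Notation mwp_pow := (mx_pow mwp_add mwp_mul M0 Mm).
Notation mwp_star := (is_star mwp_add mwp_mul M0 Mm mwp_le).
Notation mwpi_mxmul := (mx_mul mwpi_add mwpi_mul I0).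
Notation mwpi_pow := (mx_pow mwpi_add mwpi_mul I0 Im).
Notation mwpi_star := (is_star mwpi_add mwpi_mul I0 Im mwpi_le).

Lemma mwpi_addA : associative mwpi_add. Proof. by do 3 case. Qed.
Lemma mwpi_addC : commutative mwpi_add. Proof. by do 2 case. Qed.
Lemma mwpi_add0 : left_id I0 mwpi_add. Proof. by case. Qed.
HB.instance Definition _ :=
  Monoid.isComLaw.Build mwpi I0 mwpi_add mwpi_addA mwpi_addC mwpi_add0.

Lemma mwpi_addInf x : mwpi_add Iinf x = Iinf. Proof. by case: x. Qed.
Lemma mwpi_mulInf x : mwpi_mul Iinf x = Iinf. Proof. by case: x. Qed.
Lemma mwpi_mulrInf x : mwpi_mul x Iinf = Iinf. Proof. by case: x. Qed.

Lemma mwpi_add_neq_inf x y :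
  mwpi_add x y <> Iinf -> x <> Iinf /\ y <> Iinf.
Proof. by case: x; case: y. Qed.

Lemma big_mwpi_add_inf (I : finType) (F : I -> mwpi) i0 :
  F i0 = Iinf -> \big[mwpi_add/I0]_i F i = Iinf.
Proof. by move=> Fi0; rewrite (bigD1 i0) //= Fi0 mwpi_addInf. Qed.

Lemma mx_mul_infl n (A B : mx mwpi n) i j :
  A i j = Iinf -> mwpi_mxmul A B i j = Iinf.
Proof.
by move=> Aij; rewrite /mx_mul (big_mwpi_add_inf (i0 := j)) // Aij mwpi_mulInf.
Qed.

Lemma mx_mul_infr n (A B : mx mwpi n) i j :
  B i j = Iinf -> mwpi_mxmul A B i j = Iinf.
Proof.
by move=> Bij; rewrite /mx_mul (big_mwpi_add_inf (i0 := i)) // Bij mwpi_mulrInf.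
Qed.

(* A^1 = 1 A already contains m x A_ij = A_ij. *)
Lemma mwpi_star_inf n (A S : mx mwpi n) i j :
  mwpi_star A S -> A i j = Iinf -> S i j = Iinf.
Proof.
move=> AS Aij; have [/(_ 1%N) le_pow_S _] := AS i j.
have pow1 : mwpi_pow A 1 i j = Iinf.
  by rewrite /= /mx_mul (big_mwpi_add_inf (i0 := i)) // /mx_one eqxx Aij.
by move: le_pow_S; rewrite pow1 /mwpi_le; case: (S i j).
Qed.

Lemma emb_add x y : emb (mwp_add x y) = mwpi_add (emb x) (emb y).
Proof. by case: x; case: y. Qed.
Lemma emb_mul x y : emb (mwp_mul x y) = mwpi_mul (emb x) (emb y).
Proof. by case: x; case: y. Qed.
Lemma emb_rank x : mwpi_rank (emb x) = mwp_rank x. Proof. by case: x. Qed.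
Lemma emb_neq_inf x : emb x <> Iinf. Proof. by case: x. Qed.

Definition unemb (x : mwpi) : mwp :=
  match x with I0 => M0 | Im => Mm | Iw => Mw | Ip | Iinf => Mp end.

Lemma unembK x : x <> Iinf -> emb (unemb x) = x. Proof. by case: x. Qed.

Lemma emb_big (I : Type) (r : seq I) (P : pred I) (F : I -> mwp) :
  emb (\big[mwp_add/M0]_(i <- r | P i) F i) =
  \big[mwpi_add/I0]_(i <- r | P i) emb (F i).
Proof. exact: (big_morph emb emb_add). Qed.

Lemma emb_mx_pow n (A' : mx mwp n) (A : mx mwpi n) :
  (forall i j, emb (A' i j) = A i j) ->
  forall k i j, emb (mwp_pow A' k i j) = mwpi_pow A k i j.
Proof.
move=> EA; elim=> [|k IHk] i j /=; first by rewrite /mx_one; case: (i == j).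
by rewrite emb_big; apply: eq_bigr => l _; rewrite emb_mul IHk EA.
Qed.

Lemma mwp_star_unemb n (A' : mx mwp n) (A S : mx mwpi n) :
  (forall i j, emb (A' i j) = A i j) -> mwpi_star A S ->
  (forall i j, S i j <> Iinf) -> mwp_star A' (fun i j => unemb (S i j)).
Proof.
move=> EA AS Sfin i j; have [le_pow_S S_least] := AS i j.
rewrite /mwp_le -emb_rank unembK //; split=> [k | x le_pow_x].
  by rewrite -emb_rank (emb_mx_pow EA); apply: le_pow_S.
rewrite -(emb_rank x); apply: S_least => k.
by rewrite -(emb_mx_pow EA) /mwpi_le !emb_rank; apply: le_pow_x.
Qed.

Section Evaluation.
Variables (p n : nat) (a : choice p).
Notation dmx_add := (mx_add (@dadd p)).
Notation dmx_mul := (mx_mul (@dadd p) (@dmul p) (dcst I0)).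
Notation dmx_pow := (mx_pow (@dadd p) (@dmul p) (dcst I0) (dcst Im)).

Lemma dsum_eval (I : Type) (r : seq I) (P : pred I) (F : I -> dcoef p) :
  (\big[@dadd p/dcst I0]_(i <- r | P i) F i) a =
  \big[mwpi_add/I0]_(i <- r | P i) F i a.
Proof.
by apply: (big_morph (fun f : dcoef p => f a) (op1 := mwpi_add) (op2 := @dadd p)).
Qed.

Lemma eval_mx_mul (A B : mx (dcoef p) n) i j :
  eval_mx (dmx_mul A B) a i j = mwpi_mxmul (eval_mx A a) (eval_mx B a) i j.
Proof. exact: dsum_eval. Qed.

Lemma eval_mx_pow (A : mx (dcoef p) n) k i j :
  eval_mx (dmx_pow A k) a i j = mwpi_pow (eval_mx A a) k i j.
Proof.
elim: k i j => [|k IHk] i j /=.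
  by rewrite /eval_mx /mx_one; case: (i == j).
by rewrite eval_mx_mul; apply: eq_bigr => l _; rewrite IHk.
Qed.

(* For the leastness part, compare S with the coefficient that agrees with S
   except at a, where it takes the candidate bound x. *)
Lemma eval_is_star (A S : mx (dcoef p) n) :
  is_star (@dadd p) (@dmul p) (dcst I0) (dcst Im) (@dle p) A S ->
  mwpi_star (eval_mx A a) (eval_mx S a).
Proof.
move=> AS i j; have [le_pow_S S_least] := AS i j; split=> [k | x le_pow_x].
  by rewrite -eval_mx_pow; apply: le_pow_S.
pose g : dcoef p := fun b => if [forall t, b t == a t] then x else S i j b.
have ga : g a = x by rewrite /g; case: forallP => // -[].
suff /(_ a) : dle (S i j) g by rewrite ga.
apply: S_least => k b; rewrite /g.
case: forallP => [eq_ba | _]; last exact: le_pow_S.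
have -> : b = a by apply: functional_extensionality => t; apply/eqP.
by have := le_pow_x k; rewrite -eval_mx_pow.
Qed.

Lemma eval_with_diag_inf (S X : mx (dcoef p) n) :
  (forall i j, dmx_add (dmx_add S (diag_inf S)) X i j a <> Iinf) ->
  [/\ forall i j, S i j a <> Iinf, forall i, S i i a = Im,
      forall i j, X i j a <> Iinf &
      forall i j, dmx_add (dmx_add S (diag_inf S)) X i j a =
                  mwpi_add (S i j a) (X i j a)].
Proof.
move=> fin.
have {}fin i j : [/\ S i j a <> Iinf, diag_inf S i j a <> Iinf & X i j a <> Iinf].
  by have /mwpi_add_neq_inf[/mwpi_add_neq_inf[]] := fin i j.
have diag0 i j : diag_inf S i j a = I0.
  by have [_ + _] := fin i j; rewrite /diag_inf; case: ifP.
split=> [i j | i | i j | i j]; try by case: (fin i j).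
  have := diag0 i i; rewrite /diag_inf eqxx /=.
  by case: (fin i i) => + _ _; case: (S i i a).
by rewrite /mx_add /dadd diag0; case: (S i j a).
Qed.

End Evaluation.

Section JKTyping.
Variable n : nat.
Notation vadd := (@vc_add mwp mwp_add n).
Notation vscale := (@vc_scale mwp mwp_mul n).
Notation sgl := (@vc_sgl mwp M0 n).

Definition jk_typable (C : cmd n) (A : mx mwpi n) : Prop :=
  exists M' : mx mwp n, jk_cmd C M' /\ forall i j, emb (M' i j) = A i j.

Lemma jk_typable_eq C (A B : mx mwpi n) :
  jk_typable C A -> (forall i j, A i j = B i j) -> jk_typable C B.
Proof. by move=> [M' [CM' EM']] eAB; exists M'; split=> // i j; rewrite EM'. Qed.

Lemma jk_typable_asgn j e (V : vc mwpi n) :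
  (exists V', jk_expr e V' /\ forall i, emb (V' i) = V i) ->
  jk_typable (Asgn j e) (col_replace I0 Im j V).
Proof.
move=> [V' [eV' EV']]; exists (col_replace M0 Mm j V'); split; first exact: JK_A.
by move=> r c; rewrite /col_replace /mx_one; case: (c == j); last case: (r == c).
Qed.

Lemma jk_typable_seq C1 C2 (A1 A2 : mx mwpi n) :
  jk_typable C1 A1 -> jk_typable C2 A2 ->
  jk_typable (Seq C1 C2) (mwpi_mxmul A1 A2).
Proof.
move=> [M1 [CM1 EM1]] [M2 [CM2 EM2]]; exists (mx_mul mwp_add mwp_mul M0 M1 M2).
split=> [|i j]; first exact: JK_C.
by rewrite emb_big; apply: eq_bigr => l _; rewrite emb_mul EM1 EM2.
Qed.

Lemma jk_typable_ite C1 C2 (A1 A2 : mx mwpi n) :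
  jk_typable C1 A1 -> jk_typable C2 A2 ->
  jk_typable (Ite C1 C2) (mx_add mwpi_add A1 A2).
Proof.
move=> [M1 [CM1 EM1]] [M2 [CM2 EM2]]; exists (mx_add mwp_add M1 M2).
by split=> [|i j]; [exact: JK_I | rewrite /mx_add emb_add EM1 EM2].
Qed.

Lemma jk_typable_loop l C (A S : mx mwpi n) :
  jk_typable C A -> mwpi_star A S ->
  (forall i j, S i j <> Iinf) -> (forall i, S i i = Im) ->
  jk_typable (Loop l C) (fun i j => mwpi_add (S i j)
    (if (i == l) && [exists k, mwpi_rank (S k j) == 3] then Ip else I0)).
Proof.
move=> [M' [CM' EM']] AS Sfin Sdiag; set S' := fun i j => unemb (S i j).
exists (mx_add mwp_add S' (jk_loop_extra l S')); split.
  apply: JK_L CM' (mwp_star_unemb EM' AS Sfin) _ => i.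
  by rewrite /S' Sdiag.
move=> i j; rewrite /mx_add emb_add unembK //; congr mwpi_add.
rewrite /jk_loop_extra (eq_existsb (fun k => _ : _ = (mwpi_rank (S k j) == 3))).
  by case: ifP.
by move=> k; rewrite /S' -emb_rank unembK.
Qed.

Lemma jk_typable_while C (A S : mx mwpi n) :
  jk_typable C A -> mwpi_star A S ->
  (forall i j, S i j <> Iinf) -> (forall i, S i i = Im) ->
  (forall i j, S i j <> Ip) -> jk_typable (While C) S.
Proof.
move=> [M' [CM' EM']] AS Sfin Sdiag Snp.
exists (fun i j => unemb (S i j)); split=> [|i j]; last exact: unembK.
apply: JK_W CM' (mwp_star_unemb EM' AS Sfin) _ _ => [i | i j].
  by rewrite Sdiag.
by move: (Sfin i j) (Snp i j); case: (S i j).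
Qed.

(* Under a_k = 0, 1, 2 the vector of E^A is that of rule E4, E3, E2. *)
Lemma jk_expr_EA_vec p e k i j (a : choice p) (hk : k < p) :
  (forall x, evar e x = (x == i) || (x == j)) ->
  jk_expr e (vadd (vscale Mp (sgl Mm i)) (sgl Mm j)) ->
  jk_expr e (vadd (sgl Mm i) (vscale Mp (sgl Mm j))) ->
  exists V', jk_expr e V' /\ forall x, emb (V' x) = EA_vec k i j x a.
Proof.
move=> var_e E3 E4.
rewrite /EA_vec /vc_add /vc_scale /dadd /dmul /delta insubT /=.
case: (a (Sub k hk)) => -[|[|[|//]]] _ /=.
- exists (vadd (sgl Mm i) (vscale Mp (sgl Mm j))); split=> // x.
  by rewrite /pair_vec /vc_add /vc_scale /vc_sgl /dadd /dcst;
    case: (x == i); case: (x == j).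
- exists (vadd (vscale Mp (sgl Mm i)) (sgl Mm j)); split=> // x.
  by rewrite /pair_vec /vc_add /vc_scale /vc_sgl /dadd /dcst;
    case: (x == i); case: (x == j).
- exists (fun x => if evar e x then Mw else M0); split=> [|x]; first exact: JK_E2.
  by rewrite var_e /pair_vec /vc_add /vc_sgl /dadd /dcst;
    case: (x == i); case: (x == j).
Qed.

Lemma det_expr_jk p k e (V : vc (dcoef p) n) k' :
  det_expr k e V k' -> k' <= p ->
  forall a, exists V', jk_expr e V' /\ forall i, emb (V' i) = V i a.
Proof.
case=> {k e V k'} [k i j hk | k i j hk | k i j _ | k i _] a.
- by apply: (jk_expr_EA_vec a hk) => //;
    [apply: JK_E3sub | apply: JK_E4sub]; apply: JK_E1.
- by apply: (jk_expr_EA_vec a hk) => //;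
    [apply: JK_E3add | apply: JK_E4add]; apply: JK_E1.
- exists (fun x => if evar (EMul i j) x then Mw else M0).
  split=> [|x]; first exact: JK_E2.
  by rewrite /pair_vec /vc_add /vc_sgl /dadd /dcst /=;
    case: (x == i); case: (x == j).
- exists (sgl Mm i); split=> [|x]; first exact: JK_E1.
  by rewrite /vc_sgl /dcst; case: (x == i).
Qed.

Lemma det_cmd_leq p k C (M : mx (dcoef p) n) k' : det_cmd k C M k' -> k <= k'.
Proof.
elim=> {k C M k'} // [k j e V k' [] //
  | k C1 M1 k1 C2 M2 k2 _ le_k_k1 _ le_k1_k2
  | k C1 M1 k1 C2 M2 k2 _ le_k_k1 _ le_k1_k2];
  exact: leq_trans le_k_k1 le_k1_k2.
Qed.

Lemma det_cmd_jk p k C (M : mx (dcoef p) n) k' :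
  det_cmd k C M k' -> k' <= p ->
  forall a, (forall i j, M i j a <> Iinf) -> jk_typable C (eval_mx M a).
Proof.
elim=> {k C M k'}.
- move=> k j e V k' eV le_k'p a _.
  have eVa := det_expr_jk eV le_k'p a.
  apply: (jk_typable_eq (jk_typable_asgn j eVa)) => r c.
  by rewrite /eval_mx /col_replace /mx_one; case: (c == j); last case: (r == c).
- move=> k C1 M1 k1 C2 M2 k2 _ IH1 CM2 IH2 le_k2p a fin.
  have le_k1p := leq_trans (det_cmd_leq CM2) le_k2p.
  have fin_mul i j : mwpi_mxmul (eval_mx M1 a) (eval_mx M2 a) i j <> Iinf.
    by rewrite -eval_mx_mul; apply: fin.
  have CA1 : jk_typable C1 (eval_mx M1 a).
    by apply: IH1 => // i j Mij; apply: (fin_mul i j); apply: mx_mul_infl.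
  have CA2 : jk_typable C2 (eval_mx M2 a).
    by apply: IH2 => // i j Mij; apply: (fin_mul i j); apply: mx_mul_infr.
  by apply: (jk_typable_eq (jk_typable_seq CA1 CA2)) => i j; rewrite eval_mx_mul.
- move=> k C1 M1 k1 C2 M2 k2 _ IH1 CM2 IH2 le_k2p a fin.
  have le_k1p := leq_trans (det_cmd_leq CM2) le_k2p.
  by apply: jk_typable_ite; [apply: IH1 | apply: IH2] => // i j;
    have /mwpi_add_neq_inf[] := fin i j.
- move=> k l C M S k' _ IH MS le_k'p a fin.
  have MSa := eval_is_star a MS.
  have [Sfin Sdiag _ eval_res] := eval_with_diag_inf fin.
  have CA : jk_typable C (eval_mx M a).
    by apply: IH => // i j /(mwpi_star_inf MSa); apply: Sfin.
  by apply: (jk_typable_eq (jk_typable_loop l CA MSa Sfin Sdiag)) => i j;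
    rewrite /eval_mx eval_res.
- move=> k C M S k' _ IH MS le_k'p a fin.
  have MSa := eval_is_star a MS.
  have [Sfin Sdiag Pfin eval_res] := eval_with_diag_inf fin.
  have Snp i j : S i j a <> Ip.
    by move: (Pfin i j); rewrite /p_inf; case: (S i j a).
  have CA : jk_typable C (eval_mx M a).
    by apply: IH => // i j /(mwpi_star_inf MSa); apply: Sfin.
  apply: (jk_typable_eq (jk_typable_while CA MSa Sfin Sdiag Snp)) => i j.
  by rewrite /eval_mx eval_res /p_inf; case: (S i j a) (Snp i j).
Qed.

End JKTyping.

Theorem theorem10 (n p : nat) (P : cmd n) (M : mx (dcoef p) n) :
  det_derivable P M ->
  forall a : choice p,
    (exists M' : mx mwp n, jk_cmd P M' /\
       forall i j, emb (M' i j) = eval_mx M a i j)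
    <-> (forall i j, eval_mx M a i j <> Iinf).
Proof.
move=> PM a; split=> [[M' [_ EM']] i j | fin].
  by rewrite -EM'; apply: emb_neq_inf.
exact: det_cmd_jk PM (leqnn p) a fin.
Qed.
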